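(* For every integer $q\ge1$, $\sigma(q)\le e(q)$.
   Context: Standing setup: $b\ge2$ integer, $\mathcal{A}=\{0,\dots,b-1\}$, $\gamma\in(1/b,1)$, $\psi$ a $\mathbb{Z}$-periodic $C^1$ function. $S(x,\mathbf{i})=\sum_{n\ge1}\gamma^{n-1}\psi\big(\frac{x+i_1+i_2b+\cdots+i_nb^{n-1}}{b^n}\big)$ for $\mathbf{i}\in\mathcal{A}^{\mathbb{Z}^+}$, $S'=\partial_xS$. For $\mathbf{u}\in\mathcal{A}^q$, $x(\mathbf{u})=(x+u_1+u_2b+\cdots+u_qb^{q-1})/b^q$. Sequences $\mathbf{i},\mathbf{j}$ are $(\varepsilon,\delta)$-tangent at $x_0$ if $|S(x_0,\mathbf{i})-S(x_0,\mathbf{j})|\le\varepsilon$ and $|S'(x_0,\mathbf{i})-S'(x_0,\mathbf{j})|\le\delta$. $E(q,x_0;\varepsilon,\delta)$: pairs $(\mathbf{k},\mathbf{l})\in\mathcal{A}^q\times\mathcal{A}^q$ with some $\mathbf{u},\mathbf{v}\in\mathcal{A}^{\mathbb{Z}^+}$ such that the concatenations $\mathbf{ku},\mathbf{lv}$ are $(\varepsilon,\delta)$-tangent at $x_0$. For $J\subset\mathbb{R}$: $E(q,J;\varepsilon,\delta)=\bigcup_{x\in J}E(q,x;\varepsilon,\delta)$, $E(q,J)=\bigcap_{\varepsilon,\delta>0}E(q,J;\varepsilon,\delta)$, $e(q,J)=\max_{\mathbf{k}\in\mathcal{A}^q}\#\{\mathbf{l}:(\mathbf{k},\mathbf{l})\in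 E(q,J)\}$, and $e(q)=\lim_{p\to\infty}\max_{0\le k<b^p}e(q,[k/b^p,(k+1)/b^p])$. Weight function: measurable $\omega:[0,1)\to(0,\infty)$ with $\omega,1/\omega$ bounded. Admissible testing function of order $q$: measurable $V:[0,1)\times\mathcal{A}^q\times\mathcal{A}^q\to[0,\infty)$ such that for some $\varepsilon,\delta>0$, $V(x,\mathbf{u},\mathbf{v})V(x,\mathbf{v},\mathbf{u})\ge1$ whenever $(\mathbf{u},\mathbf{v})\in E(q,x;\varepsilon,\delta)$, $x\in[0,1)$. $\Sigma_{V,\omega}(x)=\sup_{\mathbf{u}}\frac{\omega(x)}{\omega(x(\mathbf{u}))}\sum_{\mathbf{v}}V(x,\mathbf{u},\mathbf{v})$; $\sigma(q)=\inf_{\omega,V}\|\Sigma_{V,\omega}\|_\infty$. *)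

From Stdlib Require Import Reals ClassicalEpsilon.
From mathcomp Require Import all_boot.
Local Open Scope R_scope.

Definition asbool (P : Prop) : bool :=
  if excluded_middle_informative P then true else false.

(* limit of a real sequence (meaningful when it converges) *)
Definition lim_seq (u : nat -> R) : R :=
  epsilon (inhabits 0) (fun l => Un_cv u l).

(* derivative of f at x (meaningful when f is derivable at x) *)
Definition deriv (f : R -> R) (x : R) : R :=
  epsilon (inhabits 0) (fun l => derivable_pt_lim f x l).

Definition null_set (N : R -> Prop) : Prop :=
  forall eps, 0 < eps -> exists a c : nat -> R,
    (forall n, a n <= c n) /\
    (forall x, N x -> exists n, a n < x < c n) /\
    (forall m, sum_f_R0 (fun n => c n - a n) m <= eps).

Inductive borel : (R -> Prop) -> Prop :=
| borel_int (a c : R) : borel (fun x => a < x < c)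
| borel_compl (A : R -> Prop) : borel A -> borel (fun x => ~ A x)
| borel_union (F : nat -> R -> Prop) :
    (forall n, borel (F n)) -> borel (fun x => exists n, F n x)
| borel_ext (A B : R -> Prop) : borel A -> (forall x, A x <-> B x) -> borel B.

(* Lebesgue measurable sets = completion of the Borel sets *)
Definition lmeas (E : R -> Prop) : Prop :=
  exists B N, borel B /\ null_set N /\ (forall x, ~ (E x <-> B x) -> N x).

Definition in01 (x : R) : Prop := 0 <= x < 1.

Definition meas01 (f : R -> R) : Prop :=
  forall a, lmeas (fun x => in01 x /\ a < f x).

Definition esssup01_le (f : R -> R) (c : R) : Prop :=
  null_set (fun x => in01 x /\ c < f x).

(* digit sequences i in A^{Z^+}; position n (0-based) is i_{n+1} *)
Definition digits (b : nat) (i : nat -> nat) : Prop := forall n, (i n < b)%nat.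

Definition num (b : nat) (i : nat -> nat) (n : nat) : nat :=
  (\sum_(k < n) i k * b ^ k)%N.

Definition S (b : nat) (gam : R) (psi : R -> R) (x : R) (i : nat -> nat) : R :=
  lim_seq (fun N => sum_f_R0
    (fun n => gam ^ n * psi ((x + INR (num b i n.+1)) / INR b ^ n.+1)) N).

Definition Sd (b : nat) (gam : R) (psi : R -> R) (x : R) (i : nat -> nat) : R :=
  deriv (fun y => S b gam psi y i) x.

Definition tangent (b : nat) (gam : R) (psi : R -> R)
    (eps del x0 : R) (i j : nat -> nat) : Prop :=
  Rabs (S b gam psi x0 i - S b gam psi x0 j) <= eps /\
  Rabs (Sd b gam psi x0 i - Sd b gam psi x0 j) <= del.

Definition word (q b : nat) := {ffun 'I_q -> 'I_b}.

(* concatenation k u of a word of length q with an infinite sequence *)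
Definition catw (q b : nat) (k : word q b) (u : nat -> nat) : nat -> nat :=
  fun n => oapp (fun i : 'I_q => nat_of_ord (k i)) (u (n - q)%N) (insub n).

Definition xw (q b : nat) (x : R) (u : word q b) : R :=
  (x + INR (\sum_(i < q) (u i : nat) * b ^ i)%N) / INR b ^ q.

Definition Ex (b : nat) (gam : R) (psi : R -> R) (q : nat)
    (x0 eps del : R) (k l : word q b) : Prop :=
  exists u v : nat -> nat, digits b u /\ digits b v /\
    tangent b gam psi eps del x0 (catw q b k u) (catw q b l v).

Definition EJ (b : nat) (gam : R) (psi : R -> R) (q : nat)
    (J : R -> Prop) (k l : word q b) : Prop :=
  forall eps del, 0 < eps -> 0 < del ->
    exists x, J x /\ Ex b gam psi q x eps del k l.

Definition eJ (b : nat) (gam : R) (psi : R -> R) (q : nat) (J : R -> Prop) : nat :=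
  (\max_(k : word q b) #|[set l : word q b | asbool (EJ b gam psi q J k l)]|)%N.

Definition badic (b p k : nat) (x : R) : Prop :=
  INR k / INR b ^ p <= x <= INR k.+1 / INR b ^ p.

Definition emax (b : nat) (gam : R) (psi : R -> R) (q p : nat) : nat :=
  \max_(k < (b ^ p)%N)
     eJ b gam psi q (badic b p k).

(* e(q) = lim_{p->oo} emax p  (a sequence of naturals, eventually constant) *)
Definition e_q (b : nat) (gam : R) (psi : R -> R) (q : nat) : nat :=
  epsilon (inhabits 0%N)
    (fun m => exists P, forall p, (P <= p)%nat -> emax b gam psi q p = m).

Definition weight (om : R -> R) : Prop :=
  meas01 om /\ (forall x, in01 x -> 0 < om x) /\
  exists M, forall x, in01 x -> om x <= M /\ / om x <= M.

Definition admissible (b : nat) (gam : R) (psi : R -> R) (q : nat)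
    (V : R -> word q b -> word q b -> R) : Prop :=
  (forall u v, meas01 (fun x => V x u v)) /\
  (forall x u v, in01 x -> 0 <= V x u v) /\
  exists eps del, 0 < eps /\ 0 < del /\
    forall x u v, in01 x -> Ex b gam psi q x eps del u v ->
      1 <= V x u v * V x v u.

Definition Sigma (q b : nat) (V : R -> word q b -> word q b -> R)
    (om : R -> R) (x : R) : R :=
  \big[Rmax/0]_(u : word q b)
     (om x / om (xw q b x u) * \big[Rplus/0]_(v : word q b) V x u v).

(* sigma(q) <= c, where sigma(q) = inf_{omega,V} ||Sigma_{V,omega}||_oo *)
Definition sigma_le (b : nat) (gam : R) (psi : R -> R) (q : nat) (c : R) : Prop :=
  forall eta, 0 < eta -> exists (om : R -> R) (V : R -> word q b -> word q b -> R),
    weight om /\ admissible b gam psi q V /\ esssup01_le (Sigma q b V om) (c + eta).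

(** Every b-adic interval of generation [p+1] lies in one of generation [p],
    so [p |-> max_k e(q, I_{p,k})] is a nonincreasing sequence of natural
    numbers and some generation [p] realises [e(q)].  Take [omega = 1] and let
    [V(x,u,v)] be the indicator of [(u,v) \in E(q,I)], where [I] is the b-adic
    interval of generation [p] containing [x].  As there are finitely many
    intervals and pairs of words, one tolerance [eps = delta] works for all of
    them: [(eps,eps)]-tangency at a point of [I] forces [(u,v) \in E(q,I)].
    Since [E] is symmetric, [V] is admissible, and [Sigma(x) <= e(q,I) <= e(q)]
    everywhere. *)
From Stdlib Require Import Reals Lra Classical ClassicalEpsilon.
From mathcomp Require Import all_boot zify.
Local Open Scope R_scope.

Lemma INR_expn (b p : nat) : INR (b ^ p)%N = INR b ^ p.
Proof.
elim: p => [|p IH]; first by rewrite expn0.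
by rewrite expnS mult_INR IH.
Qed.

Lemma div_le_iff (a c x : R) : 0 < c -> a / c <= x <-> a <= x * c.
Proof.
move=> hc; have -> : a = a / c * c by field; lra.
rewrite Rmult_div_l; last lra.
split => h; [exact: Rmult_le_compat_r (Rlt_le _ _ hc) h | exact: Rmult_le_reg_r hc h].
Qed.

Lemma le_div_iff (a c x : R) : 0 < c -> x <= a / c <-> x * c <= a.
Proof.
move=> hc; have -> : a = a / c * c by field; lra.
rewrite Rmult_div_l; last lra.
split => h; [exact: Rmult_le_compat_r (Rlt_le _ _ hc) h | exact: Rmult_le_reg_r hc h].
Qed.

Lemma lt_div_iff (a c x : R) : 0 < c -> x < a / c <-> x * c < a.
Proof.
move=> hc; have -> : a = a / c * c by field; lra.
rewrite Rmult_div_l; last lra.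
split => h; [exact: Rmult_lt_compat_r hc h | exact: Rmult_lt_reg_r hc h].
Qed.

Lemma INR_floor_exists (N : nat) (y : R) : 0 <= y < INR N ->
  exists n, (n < N)%nat /\ INR n <= y < INR n.+1.
Proof.
elim: N => [|N IH] hy; first by simpl in hy; lra.
case: (Rlt_or_le y (INR N)) => h.
  by have [n [hn hy']] := IH (conj (proj1 hy) h); exists n; split => //; lia.
by exists N; split => //; lra.
Qed.

Lemma INR_floor_uniq (n n' : nat) (y : R) :
  INR n <= y < INR n.+1 -> INR n' <= y < INR n'.+1 -> n = n'.
Proof.
move=> hn hn'.
have /INR_lt lt1 : INR n < INR n'.+1 by lra.
have /INR_lt lt2 : INR n' < INR n.+1 by lra.
lia.
Qed.

Lemma asbool_true (P : Prop) : asbool P = true <-> P.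
Proof. by rewrite /asbool; case: excluded_middle_informative. Qed.

Lemma asbool_iff (P Q : Prop) : (P <-> Q) -> asbool P = asbool Q.
Proof.
move=> PQ; apply/idP/idP => /asbool_true h; apply/asbool_true; exact/PQ.
Qed.

Lemma sum_indicator (T : finType) (P : T -> bool) :
  \big[Rplus/0]_(v : T) (if P v then 1 else 0) = INR #|[set v | P v]|.
Proof.
rewrite -sum1_card big_mkcond (big_morph INR (id1:=0) (op1:=Rplus) plus_INR) //.
by apply: eq_bigr => v _; rewrite in_set; case: (P v).
Qed.

Lemma bigRmax_le (T : finType) (F : T -> R) (c : R) :
  0 <= c -> (forall u, F u <= c) -> \big[Rmax/0]_(u : T) F u <= c.
Proof.
move=> c_ge0 hF; apply: (big_ind (fun y => y <= c)) => // x y hx hy.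
exact: Rmax_lub.
Qed.

Lemma nonincreasing_eventually_constant (f : nat -> nat) :
  (forall p, (f p.+1 <= f p)%N) -> exists m P, forall p, (P <= p)%N -> f p = m.
Proof.
move=> f_noninc.
have f_antitone : {homo f : i j / (i <= j)%N >-> (j <= i)%N}.
  exact: homo_leq (fun _ => leqnn _) (fun _ _ _ h1 h2 => leq_trans h2 h1) f_noninc.
have f_ex : exists n, asbool (exists p, f p = n).
  by exists (f 0%N); apply/asbool_true; exists 0%N.
case: (ex_minnP f_ex) => m /asbool_true [P fP] m_min.
exists m, P => p le_Pp; apply/eqP; rewrite eqn_leq -{1}fP f_antitone //=.
by apply: m_min; apply/asbool_true; exists p.
Qed.

Lemma uniform_pos_bound (T : finType) (Q : T -> R -> Prop) :
  (forall t e e', 0 < e' <= e -> Q t e -> Q t e') ->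
  (forall t, exists e, 0 < e /\ Q t e) ->
  exists e, 0 < e /\ forall t, Q t e.
Proof.
move=> Q_down Q_ex.
suff [e [e_gt0 hQ]] : exists e, 0 < e /\ forall t, t \in index_enum T -> Q t e.
  by exists e; split => // t; apply: hQ; rewrite mem_index_enum.
elim: (index_enum T) => [|t s [e [e_gt0 hs]]]; first by exists 1; split => //; lra.
have [e1 [e1_gt0 hQ1]] := Q_ex t.
have min_gt0 := Rmin_pos _ _ e_gt0 e1_gt0.
exists (Rmin e e1); split => // t'; rewrite in_cons => /orP [/eqP ->|t's].
  by apply: (Q_down t e1) => //; split => //; apply: Rmin_r.
by apply: (Q_down t' e) => //; [split => //; apply: Rmin_l | apply: hs].
Qed.

Lemma null_set_empty (N : R -> Prop) : (forall x, ~ N x) -> null_set N.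
Proof.
move=> hN eps eps_gt0; exists (fun _ => 0), (fun _ => 0); split; first by move=> n; lra.
split; first by move=> x /hN.
by elim=> [|m IH] /=; lra.
Qed.

Lemma borel_const (P : Prop) : borel (fun _ => P).
Proof.
have borel_empty : borel (fun x => 0 < x < 0) by constructor.
case: (classic P) => hP.
  by apply: (borel_ext _ _ (borel_compl _ borel_empty)) => x; split => // _; lra.
by apply: (borel_ext _ _ borel_empty) => x; split => [|/hP []]; lra.
Qed.

Lemma borel_or (A B : R -> Prop) : borel A -> borel B -> borel (fun x => A x \/ B x).
Proof.
move=> hA hB.
apply: (borel_ext (fun x => exists n, (if n is O then A else B) x)).
  by constructor; case.
move=> x; split; first by case=> [[|n]]; auto.
by case=> h; [exists O | exists 1%N].
Qed.

Lemma borel_and (A B : R -> Prop) : borel A -> borel B -> borel (fun x => A x /\ B x).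
Proof.
move=> hA hB; apply: (borel_ext (fun x => ~ (~ A x \/ ~ B x))).
  by apply/borel_compl/borel_or; apply: borel_compl.
by move=> x; tauto.
Qed.

Lemma borel_exists (P : nat -> Prop) (G : nat -> R -> Prop) :
  (forall k, borel (G k)) -> borel (fun x => exists k, P k /\ G k x).
Proof. by move=> hG; constructor => k; apply/borel_and/hG/borel_const. Qed.

Lemma borel_itv_co (a c : R) : borel (fun x => a <= x < c).
Proof.
apply: (borel_ext (fun x => a - 1 < x < c /\ ~ (a - 1 < x < a))).
  by apply/borel_and/borel_compl; constructor.
move=> x; split; last by move=> h; split; lra.
by move=> [h1 h2]; split; [apply: Rnot_lt_le => h3; apply: h2 | ]; lra.
Qed.

Lemma meas01_of_borel (f : R -> R) : (forall a, borel (fun x => a < f x)) -> meas01 f.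
Proof.
move=> hf a; exists (fun x => in01 x /\ a < f x), (fun _ => False).
split; first exact/borel_and/hf/borel_itv_co.
by split; [apply: null_set_empty => x [] | move=> x; case; split].
Qed.

Lemma meas01_const (c : R) : meas01 (fun _ => c).
Proof. by apply: meas01_of_borel => a; apply: borel_const. Qed.

Lemma meas01_indicator (A : R -> Prop) :
  borel A -> meas01 (fun x => if asbool (A x) then 1 else 0).
Proof.
move=> hA; apply: meas01_of_borel => a.
apply: (borel_ext (fun x => a < 0 \/ (a < 1 /\ A x))).
  by apply/borel_or/borel_and => //; apply: borel_const.
move=> x; case hAx: (asbool (A x)).
  have /asbool_true Ax := hAx.
  by split; [case=> [|[]]; lra | right].
split; last by left.
by case=> [// | [_ /asbool_true]]; rewrite hAx.
Qed.

(** Unlike the closed intervals [badic], these partition [[0,1)]. *)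
Definition bcell (b p k : nat) (x : R) : Prop :=
  INR k / INR b ^ p <= x < INR k.+1 / INR b ^ p.

Section BAdic.
Variables (b : nat) (hb : (2 <= b)%N).

Lemma INR_b_gt0 : 0 < INR b.
Proof. by apply: lt_0_INR; apply/ltP; lia. Qed.

Lemma INR_bexp_gt0 p : 0 < INR b ^ p.
Proof. exact: pow_lt INR_b_gt0. Qed.

Lemma badic_scaled p k x :
  badic b p k x <-> INR k <= x * INR b ^ p <= INR k.+1.
Proof.
rewrite /badic div_le_iff ?le_div_iff //; exact: INR_bexp_gt0.
Qed.

Lemma bcell_scaled p k x :
  bcell b p k x <-> INR k <= x * INR b ^ p < INR k.+1.
Proof.
rewrite /bcell div_le_iff ?lt_div_iff //; exact: INR_bexp_gt0.
Qed.

Lemma bcell_badic {p k x} : bcell b p k x -> badic b p k x.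
Proof. by rewrite bcell_scaled badic_scaled; lra. Qed.

Lemma bcell_exists p x : in01 x -> exists k, (k < b ^ p)%N /\ bcell b p k x.
Proof.
move=> [x_ge0 x_lt1]; have hB := INR_bexp_gt0 p.
have [k [hk hx]] : exists k, (k < b ^ p)%N /\ INR k <= x * INR b ^ p < INR k.+1.
  by apply: INR_floor_exists; rewrite INR_expn; split; nra.
by exists k; rewrite bcell_scaled.
Qed.

Lemma bcell_uniq {p k k' x} : bcell b p k x -> bcell b p k' x -> k = k'.
Proof. by rewrite !bcell_scaled; apply: INR_floor_uniq. Qed.

Lemma borel_bcell p k : borel (bcell b p k).
Proof. exact: borel_itv_co. Qed.

Lemma badic_parent p k x : badic b p.+1 k x -> badic b p (k %/ b) x.
Proof.
rewrite !badic_scaled !S_INR -tech_pow_Rmult => hx.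
have hb0 := INR_b_gt0.
have lo : INR (k %/ b) * INR b <= INR k.
  by rewrite -mult_INR; apply/le_INR/leP; lia.
have hi : INR k + 1 <= (INR (k %/ b) + 1) * INR b.
  by rewrite -!S_INR -mult_INR; apply/le_INR/leP; lia.
by split; apply: (Rmult_le_reg_r (INR b)) => //; nra.
Qed.

End BAdic.

Section Tangency.
Variables (b : nat) (gam : R) (psi : R -> R) (q : nat).

Lemma Ex_le {x e d e' d'} {k l : word q b} : e <= e' -> d <= d' ->
  Ex b gam psi q x e d k l -> Ex b gam psi q x e' d' k l.
Proof.
move=> he hd [u [v [hu [hv [hS hSd]]]]].
by exists u, v; do 2 split => //; split; lra.
Qed.

Lemma Ex_sym {x e d} {k l : word q b} :
  Ex b gam psi q x e d k l -> Ex b gam psi q x e d l k.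
Proof.
move=> [u [v [hu [hv [hS hSd]]]]].
by exists v, u; do 2 split => //; split; rewrite Rabs_minus_sym.
Qed.

Lemma EJ_sub {J J' : R -> Prop} {k l : word q b} : (forall x, J' x -> J x) ->
  EJ b gam psi q J' k l -> EJ b gam psi q J k l.
Proof.
move=> sJ' h e d he hd; have [x [hx hE]] := h e d he hd.
by exists x; split => //; apply: sJ'.
Qed.

Lemma eJ_sub (J J' : R -> Prop) : (forall x, J' x -> J x) ->
  (eJ b gam psi q J' <= eJ b gam psi q J)%N.
Proof.
move=> sJ'; apply/bigmax_leqP => k _; apply: leq_trans (leq_bigmax k).
apply/subset_leq_card/subsetP => l; rewrite !in_set.
by move/asbool_true/(EJ_sub sJ')/asbool_true.
Qed.

Lemma not_EJ_tolerance {J : R -> Prop} {k l : word q b} :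
  ~ EJ b gam psi q J k l ->
  exists e, 0 < e /\ forall x, J x -> ~ Ex b gam psi q x e e k l.
Proof.
move=> notE; apply: NNPP => no_e; apply: notE => eps del eps_gt0 del_gt0.
apply: NNPP => no_x; apply: no_e; exists (Rmin eps del); split; first exact: Rmin_pos.
move=> x Jx /(Ex_le (Rmin_l eps del) (Rmin_r eps del)) hEx.
by apply: no_x; exists x.
Qed.

Lemma EJ_uniform_tolerance p : exists e, 0 < e /\
  forall (k : 'I_(b ^ p)) (u v : word q b) x,
    badic b p k x -> Ex b gam psi q x e e u v -> EJ b gam psi q (badic b p k) u v.
Proof.
pose Q (t : 'I_(b ^ p) * word q b * word q b) e := forall x,
  badic b p t.1.1 x -> Ex b gam psi q x e e t.1.2 t.2 ->
  EJ b gam psi q (badic b p t.1.1) t.1.2 t.2.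
have [e [e_gt0 hQ]] : exists e, 0 < e /\ forall t, Q t e.
  apply: uniform_pos_bound.
    by move=> t e e' [_ le_e'e] hQ x hx /(Ex_le le_e'e le_e'e); apply: hQ.
  move=> t; case: (classic (EJ b gam psi q (badic b p t.1.1) t.1.2 t.2)) => hE.
    by exists 1; split; [lra | move=> x _ _].
  have [e [e_gt0 noE]] := not_EJ_tolerance hE.
  by exists e; split => // x /noE noEx /noEx.
by exists e; split => // k u v x; apply: (hQ (k, u, v)).
Qed.

Hypothesis hb : (2 <= b)%N.

Lemma emax_nonincreasing p : (emax b gam psi q p.+1 <= emax b gam psi q p)%N.
Proof.
apply/bigmax_leqP => k _.
have hk : (k %/ b < b ^ p)%N.
  by rewrite ltn_divLR ?(mulnC _ b) -?expnS ?ltn_ord //; lia.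
apply: leq_trans (leq_bigmax (Ordinal hk)).
by apply: eJ_sub => x; apply: badic_parent.
Qed.

Lemma e_q_attained : exists p, emax b gam psi q p = e_q b gam psi q.
Proof.
have hconst := nonincreasing_eventually_constant _ emax_nonincreasing.
have [P hP] := epsilon_spec (inhabits 0%N)
  (fun m => exists P, forall p, (P <= p)%N -> emax b gam psi q p = m) hconst.
by exists P; apply: hP.
Qed.

End Tangency.

Definition Vcell (b : nat) (gam : R) (psi : R -> R) (q p : nat) (x : R)
    (u v : word q b) : R :=
  if asbool (exists k, ((k < b ^ p)%N /\ EJ b gam psi q (badic b p k) u v) /\
                       bcell b p k x)
  then 1 else 0.

Lemma weight_one : weight (fun _ => 1).
Proof.
split; first exact: meas01_const.
by split; [move=> x _; lra | exists 1 => x _; rewrite Rinv_1; lra].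
Qed.

Section TestingFunction.
Variables (b : nat) (gam : R) (psi : R -> R) (q p : nat).
Hypothesis hb : (2 <= b)%N.

Lemma Vcell_bcell {k x} u v : (k < b ^ p)%N -> bcell b p k x ->
  Vcell b gam psi q p x u v =
  if asbool (EJ b gam psi q (badic b p k) u v) then 1 else 0.
Proof.
move=> hk hx; rewrite /Vcell; congr (if _ then _ else _); apply: asbool_iff.
split; last by move=> hE; exists k.
by move=> [k' [[_ hE] hx']]; rewrite (bcell_uniq _ hb hx hx').
Qed.

Lemma admissible_Vcell : admissible b gam psi q (Vcell b gam psi q p).
Proof.
split.
  move=> u v; apply: meas01_indicator; apply: borel_exists => k.
  exact: borel_bcell.
split; first by move=> x u v _; rewrite /Vcell; case: asbool; lra.
have [e [e_gt0 tol]] := EJ_uniform_tolerance b gam psi q p.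
exists e, e; do 2 split => //; move=> x u v hx hE.
have [k [hk hxk]] := bcell_exists _ hb p x hx.
have /(tol (Ordinal hk)) uv := bcell_badic _ hb hxk.
rewrite !(Vcell_bcell _ _ hk hxk).
move: (uv _ _ hE) (uv _ _ (Ex_sym _ _ _ _ hE)) => /asbool_true -> /asbool_true ->.
lra.
Qed.

Lemma Sigma_Vcell_le x : in01 x ->
  Sigma q b (Vcell b gam psi q p) (fun _ => 1) x <= INR (emax b gam psi q p).
Proof.
move=> hx; have [k [hk hxk]] := bcell_exists _ hb p x hx.
apply: bigRmax_le => [|u]; first exact: pos_INR.
rewrite /Rdiv Rinv_1 Rmult_1_l Rmult_1_l.
under eq_bigr => v _ do rewrite (Vcell_bcell _ _ hk hxk).
rewrite sum_indicator; apply/le_INR/leP.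
apply: leq_trans (leq_bigmax (Ordinal hk)).
exact: leq_trans (leq_bigmax u).
Qed.

End TestingFunction.

Theorem lemma2p3 (b : nat) (gam : R) (psi dpsi : R -> R)
  (hb : (2 <= b)%nat)
  (hgam : / INR b < gam < 1)
  (hper : forall x, psi (x + 1) = psi x)
  (hder : forall x, derivable_pt_lim psi x (dpsi x))
  (hcont : continuity dpsi)
  (q : nat) (hq : (1 <= q)%nat) :
  sigma_le b gam psi q (INR (e_q b gam psi q)).
Proof.
move=> eta eta_gt0.
have [p <-] := e_q_attained b gam psi q hb.
exists (fun _ => 1), (Vcell b gam psi q p).
split; first exact: weight_one.
split; first exact: admissible_Vcell.
apply: null_set_empty => x [hx]; apply: Rle_not_lt.
have := Sigma_Vcell_le b gam psi q p hb x hx; lra.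
Qed.
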